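(* Let $\mathbb{F}_q$ be a finite field and let $s,t\ge1$ be coprime integers. Then the linear code $C=\bigoplus_{i=1}^{s}\mathrm{Rep}_t(\mathbb{F}_q)\le\mathbb{F}_q^{st}$ is a cyclic group code.
   Context: $\mathrm{Rep}_t(\mathbb{F}_q)=\{(\lambda,\dots,\lambda):\lambda\in\mathbb{F}_q\}\le\mathbb{F}_q^t$ is the repetition code; the direct sum consists of concatenations of $s$ constant blocks of length $t$. Let $\mathcal{B}=\{e_1,\dots,e_n\}$ be the standard basis of $\mathbb{F}_q^n$. For a finite group $H$ of order $n$, a linear code $C\le\mathbb{F}_q^n$ is an $H$-code if there exists a bijection $\phi:\mathcal{B}\to H$ whose $\mathbb{F}_q$-linear extension $\tilde\phi:\mathbb{F}_q^n\to\mathbb{F}_q[H]$ maps $C$ onto a two-sided ideal of $\mathbb{F}_q[H]$. $C$ is a cyclic group code if it is an $H$-code for some cyclic group $H$. *)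

From HB Require Import structures.
From mathcomp Require Import all_boot all_order all_algebra all_fingroup all_solvable all_field.
Set Implicit Arguments. Unset Strict Implicit. Unset Printing Implicit Defensive.
Import GRing.Theory.
Local Open Scope ring_scope.

(* The group algebra F[H] is modelled as {ffun gT -> F} with pointwise
   addition/scaling and convolution product. *)
Definition galg_mul (F : fieldType) (gT : finGroupType)
  (a b : {ffun gT -> F}) : {ffun gT -> F} :=
  [ffun g => \sum_(h : gT) a h * b (h^-1 * g)%g].

Definition two_sided_ideal (F : fieldType) (gT : finGroupType)
  (I : {ffun gT -> F} -> Prop) : Prop :=
  I 0 /\
  (forall x y, I x -> I y -> I (x + y)) /\
  (forall x, I x -> I (- x)) /\
  (forall (c : F) x, I x -> I [ffun g => c * x g]) /\
  (forall a x, I x -> I (galg_mul a x)) /\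
  (forall a x, I x -> I (galg_mul x a)).

(* F_q-linear extension of the bijection e_i |-> phi i on the standard basis. *)
Definition lin_ext (F : fieldType) (gT : finGroupType) (n : nat)
  (phi : 'I_n -> gT) (c : 'rV[F]_n) : {ffun gT -> F} :=
  [ffun g => \sum_(i < n) c 0 i * (phi i == g)%:R].

(* C is an H-code, H being the whole group gT (of order n via the bijection). *)
Definition is_group_code (F : fieldType) (gT : finGroupType) (n : nat)
  (C : 'rV[F]_n -> Prop) : Prop :=
  exists phi : 'I_n -> gT, bijective phi /\
    two_sided_ideal (fun a => exists c, C c /\ a = lin_ext phi c).

Definition is_cyclic_group_code (F : fieldType) (n : nat)
  (C : 'rV[F]_n -> Prop) : Prop :=
  exists gT : finGroupType, cyclic [set: gT] /\ is_group_code gT C.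

(* Direct sum of s copies of Rep_t(F): concatenations of s constant blocks
   of length t; block k consists of the indices i with i %/ t = k. *)
Definition rep_sum_code (F : fieldType) (s t : nat) : 'rV[F]_(s * t) -> Prop :=
  fun c => exists lam : nat -> F, forall i : 'I_(s * t), c 0 i = lam (i %/ t)%N.

From mathcomp Require Import all_boot all_order all_algebra all_fingroup all_solvable all_field.

Set Implicit Arguments. Unset Strict Implicit. Unset Printing Implicit Defensive.
Import GRing.Theory.
Local Open Scope ring_scope.

(* Send the group element g of Z/st to the coordinate (g mod s) t + (g mod t);
   by the Chinese remainder theorem this is a bijection, and the block of that
   coordinate is g mod s.  The code then becomes the set of functions on Z/st
   that depend only on g mod s, i.e. that are constant on the cosets of the
   subgroup sZ/stZ.  Functions constant on the classes of a group congruence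
   form a two-sided ideal of the group algebra, because convolution on either
   side by an arbitrary element preserves that invariance. *)

Section FiberIdeal.

Variables (F : fieldType) (gT : finGroupType) (T : Type) (f : gT -> T).

Definition constant_on_fibers (a : gT -> F) : Prop :=
  forall g g', f g = f g' -> a g = a g'.

Hypothesis f_mull : forall h g g', f g = f g' -> f (h * g)%g = f (h * g')%g.
Hypothesis f_mulr : forall h g g', f g = f g' -> f (g * h)%g = f (g' * h)%g.

Lemma galg_mulEr (x a : {ffun gT -> F}) (g : gT) :
  galg_mul x a g = \sum_(k : gT) x (g * k)%g * a k^-1%g.
Proof.
rewrite ffunE (reindex_inj (mulgI g)) /=.
by apply: eq_bigr => k _; rewrite invMg -mulgA mulVg mulg1.
Qed.

Lemma constant_on_fibers_galg_mull (a x : {ffun gT -> F}) :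
  constant_on_fibers x -> constant_on_fibers (galg_mul a x).
Proof.
move=> cx g g' fg; rewrite !ffunE; apply: eq_bigr => h _.
by rewrite (cx _ (h^-1 * g')%g) //; apply: f_mull.
Qed.

Lemma constant_on_fibers_galg_mulr (x a : {ffun gT -> F}) :
  constant_on_fibers x -> constant_on_fibers (galg_mul x a).
Proof.
move=> cx g g' fg; rewrite !galg_mulEr; apply: eq_bigr => k _.
by rewrite (cx _ (g' * k)%g) //; apply: f_mulr.
Qed.

Lemma two_sided_ideal_constant_on_fibers :
  two_sided_ideal (fun a : {ffun gT -> F} => constant_on_fibers a).
Proof.
do ![split] => [g g' _ | x y cx cy g g' fg | x cx g g' fg | c x cx g g' fg
               | a x | a x]; rewrite ?ffunE.
- by [].
- by rewrite (cx g g') // (cy g g').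
- by rewrite (cx g g').
- by rewrite (cx g g').
- exact: constant_on_fibers_galg_mull.
- exact: constant_on_fibers_galg_mulr.
Qed.

End FiberIdeal.

Lemma two_sided_ideal_equiv (F : fieldType) (gT : finGroupType)
    (I J : {ffun gT -> F} -> Prop) :
  (forall a, I a <-> J a) -> two_sided_ideal J -> two_sided_ideal I.
Proof.
move=> IJ [J0 [JD [JN [JZ [JL JR]]]]].
by do ![split] => [|x y /IJ ? /IJ ?|x /IJ ?|c x /IJ ?|a x /IJ ?|a x /IJ ?];
  apply/IJ; auto.
Qed.

Section LinExt.

Variables (F : fieldType) (gT : finGroupType) (n : nat) (phi : 'I_n -> gT).
Hypothesis phi_bij : bijective phi.

Lemma lin_ext_phi (c : 'rV[F]_n) (i : 'I_n) : lin_ext phi c (phi i) = c 0 i.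
Proof.
rewrite ffunE (bigD1 i) //= eqxx mulr1 big1 ?addr0 // => j ji.
by rewrite (inj_eq (bij_inj phi_bij)) (negbTE ji) mulr0.
Qed.

Lemma lin_ext_imageP (C : 'rV[F]_n -> Prop) (a : {ffun gT -> F}) :
  (exists c, C c /\ a = lin_ext phi c) <-> C (\row_i a (phi i)).
Proof.
split=> [[c [Cc ->]] | Ca].
  suff -> : \row_i lin_ext phi c (phi i) = c by [].
  by apply/rowP => i; rewrite mxE lin_ext_phi.
exists (\row_i a (phi i)); split=> //; apply/ffunP => g.
have [psi phiK psiK] := phi_bij.
by rewrite -[g]psiK lin_ext_phi mxE.
Qed.

Lemma group_code_of_fibers (T : Type) (f : gT -> T) (C : 'rV[F]_n -> Prop) :
  (forall h g g', f g = f g' -> f (h * g)%g = f (h * g')%g) ->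
  (forall h g g', f g = f g' -> f (g * h)%g = f (g' * h)%g) ->
  (forall c, C c <-> forall i j, f (phi i) = f (phi j) -> c 0 i = c 0 j) ->
  is_group_code gT C.
Proof.
move=> f_mull f_mulr defC; exists phi; split=> //.
apply: two_sided_ideal_equiv (two_sided_ideal_constant_on_fibers F f_mull f_mulr).
have [psi phiK psiK] := phi_bij.
move=> a; split=> [/lin_ext_imageP/defC ca g g' | ca].
  by rewrite -[g]psiK -[g']psiK => /ca; rewrite !mxE.
by apply/lin_ext_imageP/defC => i j /ca; rewrite !mxE.
Qed.

End LinExt.

Lemma rep_sum_codeP (F : fieldType) (s t : nat) (c : 'rV[F]_(s * t)) :
  rep_sum_code c <-> forall i j : 'I_(s * t), (i %/ t = j %/ t)%N -> c 0 i = c 0 j.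
Proof.
split=> [[lam lamE] i j eq_ij | constc]; first by rewrite !lamE eq_ij.
exists (fun k => if [pick j : 'I_(s * t) | (j %/ t == k)%N] is Some j then c 0 j
                 else 0) => i.
by case: pickP => [j /eqP/constc // | /(_ i)]; rewrite eqxx.
Qed.

Section ChineseIndex.

Local Open Scope nat_scope.

Variables s t : nat.
Hypotheses (s_gt0 : 0 < s) (t_gt0 : 0 < t).

Definition crt_index (g : nat) : nat := g %% s * t + g %% t.

Lemma crt_index_lt g : crt_index g < s * t.
Proof.
have lt_gs : g %% s < s by rewrite ltn_mod.
apply: leq_trans (_ : (g %% s).+1 * t <= s * t); last by rewrite leq_mul2r lt_gs orbT.
by rewrite /crt_index mulSn addnC ltn_add2r ltn_mod.
Qed.

Lemma crt_index_div g : crt_index g %/ t = g %% s.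
Proof. by rewrite divnMDl // divn_small ?addn0 // ltn_mod. Qed.

Lemma crt_index_mod g : crt_index g %% t = g %% t.
Proof. by rewrite modnMDl modn_mod. Qed.

Lemma eq_crt_index g g' :
  coprime s t -> crt_index g = crt_index g' -> g = g' %[mod s * t].
Proof.
move=> cop_st eq_g; apply/eqP; rewrite chinese_remainder //.
by rewrite -crt_index_div -crt_index_mod eq_g crt_index_div crt_index_mod !eqxx.
Qed.

End ChineseIndex.

Section CyclicRepetitionCode.

Variables (F : fieldType) (s t m : nat).
Hypotheses (s_gt0 : (0 < s)%N) (t_gt0 : (0 < t)%N) (cop_st : coprime s t).
(* 'I_n is a group only for n of the form m.+1; 'I_m.+1 is Z/st. *)
Hypothesis st_eq : (s * t = m.+1)%N.

Definition crt_ord (g : 'I_m.+1) : 'I_(s * t) :=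
  Ordinal (crt_index_lt s_gt0 t_gt0 g).

Lemma crt_ord_bij : bijective crt_ord.
Proof.
apply: inj_card_bij; last by rewrite !card_ord st_eq.
move=> g g' /(congr1 val)/(eq_crt_index t_gt0 cop_st).
by rewrite st_eq !modn_small // => /val_inj.
Qed.

Lemma Zp_mulg_mod (h g : 'I_m.+1) : ((h * g)%g %% s = (h + g) %% s)%N.
Proof. by apply: modn_dvdm; rewrite -st_eq dvdn_mulr. Qed.

Lemma rep_sum_code_group_code : is_group_code 'I_m.+1 (@rep_sum_code F s t).
Proof.
have [phi crtK phiK] := crt_ord_bij.
have phi_mod i : (phi i %% s = i %/ t)%N by rewrite -{2}[i]phiK crt_index_div.
have phi_bij : bijective phi by exists crt_ord.
apply: (group_code_of_fibers phi_bij (f := fun g : 'I_m.+1 => (g %% s)%N)).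
- by move=> h g g' /= eq_g; rewrite !Zp_mulg_mod -modnDmr eq_g modnDmr.
- by move=> h g g' /= eq_g; rewrite !Zp_mulg_mod -modnDml eq_g modnDml.
move=> c; apply: iff_trans (rep_sum_codeP c) _.
by split=> constc i j; [rewrite /= !phi_mod | rewrite -!phi_mod]; apply: constc.
Qed.

End CyclicRepetitionCode.

Theorem corollary2p1 (F : finFieldType) (s t : nat) :
  (0 < s)%N -> (0 < t)%N -> coprime s t ->
  is_cyclic_group_code (@rep_sum_code F s t).
Proof.
move=> s_gt0 t_gt0 cop_st.
have [m st_eq] : exists m, (s * t = m.+1)%N.
  by exists (s * t).-1; rewrite prednK // muln_gt0 s_gt0.
exists ('I_m.+1 : finGroupType); split; first by rewrite Zp_cycle cycle_cyclic.
exact: rep_sum_code_group_code.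
Qed.
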